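(* Let $f:2^V\to\mathbb{Z}_{\ge0}$ be a connectivity function, $W\subseteq V$, and $(C_1,C_2,C_3)$ a $W$-improvement. Suppose that for some $W'\subseteq W$ it holds that $f(C_1\cap W')\ge f(W')$. Then for $C_1'=C_1\cup W'$ it holds that $f(C_1'\cap W)<f(W)$.
   Context: A connectivity function $f:2^V\to\mathbb{Z}_{\ge0}$ ($V$ finite) satisfies $f(\emptyset)=0$, $f(X)=f(V\setminus X)$, and $f(X\cup Y)+f(X\cap Y)\le f(X)+f(Y)$. For $W\subseteq V$, a $W$-improvement is a tripartition $(C_1,C_2,C_3)$ of $V$ (pairwise disjoint, possibly empty, union $V$) with $f(C_i)<f(W)/2$, $f(C_i\cap W)<f(W)$, $f(C_i\cap(V\setminus W))<f(W)$ for each $i$. *)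

From mathcomp Require Import all_boot.
Set Implicit Arguments. Unset Strict Implicit. Unset Printing Implicit Defensive.

Definition connectivity_function (V : finType) (f : {set V} -> nat) : Prop :=
  [/\ f set0 = 0,
      (forall X : {set V}, f X = f (~: X)) &
      (forall X Y : {set V}, f (X :|: Y) + f (X :&: Y) <= f X + f Y)].

Definition tripartition (V : finType) (C1 C2 C3 : {set V}) : Prop :=
  [/\ [disjoint C1 & C2], [disjoint C1 & C3], [disjoint C2 & C3] &
      C1 :|: C2 :|: C3 = [set: V]].

(* Condition on one part C: f(C) < f(W)/2 (written 2 f(C) < f(W), exact over nat),
   f(C ∩ W) < f(W), f(C ∩ (V \ W)) < f(W). *)
Definition improvement_part (V : finType) (f : {set V} -> nat) (W C : {set V}) : Prop :=
  [/\ 2 * f C < f W, f (C :&: W) < f W & f (C :&: ~: W) < f W].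

Definition W_improvement (V : finType) (f : {set V} -> nat) (W C1 C2 C3 : {set V}) : Prop :=
  tripartition C1 C2 C3 /\
  [/\ improvement_part f W C1, improvement_part f W C2 & improvement_part f W C3].

From mathcomp Require Import all_boot.

Lemma submodular_setU_le (V : finType) (f : {set V} -> nat) (X Y : {set V}) :
  (forall A B : {set V}, f (A :|: B) + f (A :&: B) <= f A + f B) ->
  f Y <= f (X :&: Y) -> f (X :|: Y) <= f X.
Proof.
move=> submod fY_le.
rewrite -(leq_add2r (f (X :&: Y))).
apply: leq_trans (submod X Y) _; by rewrite leq_add2l.
Qed.

Theorem lemma5 (V : finType) (f : {set V} -> nat) (W C1 C2 C3 W' : {set V}) :
  connectivity_function f ->
  W_improvement f W C1 C2 C3 ->
  W' \subset W ->
  f W' <= f (C1 :&: W') ->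
  f ((C1 :|: W') :&: W) < f W.
Proof.
move=> [_ _ submod] [_ [[_ fC1W _] _ _]] sW'W fW'_le.
have -> : (C1 :|: W') :&: W = (C1 :&: W) :|: W'.
  by rewrite setIUl (setIidPl sW'W).
apply: leq_ltn_trans fC1W; apply: submodular_setU_le => //.
by rewrite -setIA (setIidPr sW'W).
Qed.
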